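(* For any strings $S_1,S_2,S_3\in\Sigma^*$: (i) $\mathrm{RSD}(S_1,S_2)=\mathrm{RSD}(S_2,S_1)$; (ii) $0\le \mathrm{RSD}(S_1,S_2)\le 1$; (iii) $\mathrm{RSD}(S_1,S_2)=0$ if and only if $S_1=S_2$; (iv) $\mathrm{RSD}(S_1,S_3)\le \mathrm{RSD}(S_1,S_2)+\mathrm{RSD}(S_2,S_3)$. In particular $\mathrm{RSD}$ is a metric on any set of strings.
   Context: $\mathrm{ED}(c,c')$ is the minimum number of insertions and deletions transforming $c$ into $c'$. For a string $S$ of length $n$ and integers $i\le j$, $S[i,j]$ is the substring from position $i$ through $j$, $S(i,j]=S[i+1,j]$; if $i<1$ then $S[i,j]$ denotes $\bot^{-i+1}\cdot S[1,j]$ where $\bot$ is a special symbol not in $\Sigma$ (padding on the left). The relative suffix distance is $\mathrm{RSD}(S,S')=\max_{k>0}\frac{\mathrm{ED}\big(S(|S|-k,|S|],\,S'(|S'|-k,|S'|]\big)}{2k}$. *)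

From mathcomp Require Import all_boot all_order all_algebra.
From mathcomp Require Import boolp classical_sets reals.
Set Implicit Arguments.
Unset Strict Implicit.
Unset Printing Implicit Defensive.
Import Order.TTheory GRing.Theory Num.Theory.

Section EditDistance.
Variable A : Type.

Definition ed_step (c d : seq A) : Prop :=
  (exists u v a, c = u ++ v /\ d = u ++ a :: v) \/
  (exists u v a, c = u ++ a :: v /\ d = u ++ v).

Fixpoint ed_reach (n : nat) (c d : seq A) : Prop :=
  match n with
  | 0 => c = d
  | n'.+1 => exists e, ed_step c e /\ ed_reach n' e d
  end.

Lemma ed_reach_trans m n a b c :
  ed_reach m a b -> ed_reach n b c -> ed_reach (m + n) a c.
Proof.
elim: m a => [|m IH] a /= Hab Hbc; first by rewrite Hab.
case: Hab => e [He Heb]; exists e; split => //; exact: IH.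
Qed.

Lemma ed_reach_del (c : seq A) : ed_reach (size c) c [::].
Proof.
elim: c => [|x s IH] //=; exists s; split => //.
right; by exists [::], s, x.
Qed.

Lemma ed_reach_ins (c : seq A) : ed_reach (size c) [::] c.
Proof.
elim: c => [|x s IH] //=.
have H1 : ed_reach 1 s (x :: s).
  by exists (x :: s); split => //; left; exists [::], s, x.
by have := ed_reach_trans IH H1; rewrite addn1.
Qed.

Lemma ed_exists (c c' : seq A) : exists n, `[< ed_reach n c c' >].
Proof.
exists (size c + size c'); apply/asboolP.
exact: ed_reach_trans (ed_reach_del c) (ed_reach_ins c').
Qed.

Definition ED (c c' : seq A) : nat := ex_minn (ed_exists c c').

End EditDistance.

(* Strings over T; the padding symbol "bot" (not in T) is None. *)
(* suff S k = S(|S|-k, |S|], padded on the left with bot^(k-|S|) when k > |S|. *)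
Definition suff (T : Type) (S : seq T) (k : nat) : seq (option T) :=
  nseq (k - size S) None ++ map Some (drop (size S - k) S).

(* RSD(S,S') = max_{k>0} ED(S(|S|-k,|S|], S'(|S'|-k,|S'|]) / (2k),
   rendered as the supremum (over reals) of these ratios. *)
Definition RSD (R : realType) (T : Type) (S S' : seq T) : R :=
  sup [set ((ED (suff S k) (suff S' k))%:R / (2 * k)%:R : R)%R
      | k in [set k : nat | (0 < k)%N]].

From mathcomp Require Import all_boot all_order all_algebra.
From mathcomp Require Import boolp classical_sets reals.
From mathcomp Require Import zify.
Import Order.TTheory GRing.Theory Num.Theory.
Local Open Scope ring_scope.

(* ED is the path metric of the graph whose edges are single insertions and
   deletions, so it is symmetric, satisfies the triangle inequality, and is at
   most [2k] on strings of length [k]. RSD is the supremum over [k] of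
   [ED / 2k] on the length-[k] padded suffixes, so it inherits symmetry, the
   triangle inequality and the bounds [0 <= RSD <= 1] ratio by ratio. Once [k]
   exceeds both lengths, the padded suffixes determine the whole strings, so
   [RSD = 0] forces equality. *)

Section EditDistanceMetric.
Context {A : Type}.
Implicit Types c d e : seq A.

Lemma ED_reach c d : ed_reach (ED c d) c d.
Proof. by rewrite /ED; case: ex_minnP => n /asboolP. Qed.

Lemma ED_min n c d : ed_reach n c d -> (ED c d <= n)%N.
Proof. by move=> Hn; rewrite /ED; case: ex_minnP => m _; apply; apply/asboolP. Qed.

Lemma ed_step_sym c d : ed_step c d -> ed_step d c.
Proof.
by case=> [[u [v [a [-> ->]]]]|[u [v [a [-> ->]]]]]; [right|left]; exists u, v, a.
Qed.

Lemma ed_reach_sym n c d : ed_reach n c d -> ed_reach n d c.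
Proof.
elim: n c => [|n IH] c; first by move=> /= ->.
case=> e [Hce Hed]; rewrite -addn1.
by apply: ed_reach_trans (IH _ Hed) _; exists c; split=> //; apply: ed_step_sym.
Qed.

Lemma EDC c d : ED c d = ED d c.
Proof. by apply/anti_leq/andP; split; apply/ED_min/ed_reach_sym/ED_reach. Qed.

Lemma ED_triangle c d e : (ED c e <= ED c d + ED d e)%N.
Proof. exact/ED_min/ed_reach_trans/ED_reach/ED_reach. Qed.

Lemma EDnn c : ED c c = 0%N.
Proof. by apply/eqP; rewrite -leqn0; apply: (@ED_min 0). Qed.

Lemma ED_le_size c d : (ED c d <= size c + size d)%N.
Proof. exact/ED_min/ed_reach_trans/ed_reach_ins/ed_reach_del. Qed.

Lemma ED_eq0 c d : ED c d = 0%N -> c = d.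
Proof. by move=> H0; have := ED_reach c d; rewrite H0. Qed.

End EditDistanceMetric.

Section PaddedSuffix.
Context {T : Type}.
Implicit Types S : seq T.

Lemma size_suff S k : size (suff S k) = k.
Proof. rewrite /suff size_cat size_nseq size_map size_drop; lia. Qed.

Lemma pmap_suff S k : pmap id (suff S k) = drop (size S - k) S.
Proof.
rewrite /suff pmap_cat (map_pK (g := Some) (fun _ => erefl)).
by elim: (k - size S)%N.
Qed.

Lemma suff_inj S S' k : (size S <= k)%N -> (size S' <= k)%N ->
  suff S k = suff S' k -> S = S'.
Proof.
move=> /eqP HS /eqP HS' /(congr1 (pmap id)).
by rewrite !pmap_suff HS HS' !drop0.
Qed.

End PaddedSuffix.

Section RelativeSuffixDistance.
Variables (R : realType) (T : Type).
Implicit Types S : seq T.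

Definition rsd_ratio S S' (k : nat) : R :=
  (ED (suff S k) (suff S' k))%:R / (2 * k)%:R.

Lemma rsd_ratio_ge0 S S' k : 0 <= rsd_ratio S S' k.
Proof. by rewrite /rsd_ratio divr_ge0. Qed.

Lemma rsd_ratio_le1 S S' k : (0 < k)%N -> rsd_ratio S S' k <= 1.
Proof.
move=> k_gt0; rewrite /rsd_ratio ler_pdivrMr ?ltr0n ?muln_gt0 // mul1r ler_nat.
by have := ED_le_size (suff S k) (suff S' k); rewrite !size_suff addnn -mul2n.
Qed.

Lemma rsd_ratioC S S' k : rsd_ratio S S' k = rsd_ratio S' S k.
Proof. by rewrite /rsd_ratio EDC. Qed.

Lemma rsd_ratio_triangle S1 S2 S3 k :
  rsd_ratio S1 S3 k <= rsd_ratio S1 S2 k + rsd_ratio S2 S3 k.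
Proof. by rewrite /rsd_ratio -mulrDl ler_wpM2r ?invr_ge0 // -natrD ler_nat ED_triangle. Qed.

Lemma rsd_ratio_le_RSD S S' k : (0 < k)%N -> rsd_ratio S S' k <= RSD R S S'.
Proof.
move=> k_gt0; apply: ub_le_sup; last by exists k.
by exists 1 => _ [j j_gt0 <-]; apply: rsd_ratio_le1.
Qed.

Lemma RSD_le_ub S S' (x : R) :
  (forall k, (0 < k)%N -> rsd_ratio S S' k <= x) -> RSD R S S' <= x.
Proof.
move=> Hx; apply: ge_sup; first by exists (rsd_ratio S S' 1), 1%N.
by move=> _ [k /Hx ? <-].
Qed.

Lemma RSD_ge0 S S' : 0 <= RSD R S S'.
Proof. exact: le_trans (rsd_ratio_ge0 S S' 1) (rsd_ratio_le_RSD S S' 1 isT). Qed.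

Lemma RSD_le1 S S' : RSD R S S' <= 1.
Proof. exact/RSD_le_ub/rsd_ratio_le1. Qed.

Lemma RSDC S S' : RSD R S S' = RSD R S' S.
Proof.
by apply/le_anti/andP; split; apply: RSD_le_ub => k k_gt0;
  rewrite rsd_ratioC rsd_ratio_le_RSD.
Qed.

Lemma RSD_triangle S1 S2 S3 : RSD R S1 S3 <= RSD R S1 S2 + RSD R S2 S3.
Proof.
apply: RSD_le_ub => k k_gt0; apply: le_trans (rsd_ratio_triangle _ S2 _ _) _.
by rewrite lerD ?rsd_ratio_le_RSD.
Qed.

Lemma RSDnn S : RSD R S S = 0.
Proof.
apply/le_anti; rewrite RSD_ge0 andbT.
by apply: RSD_le_ub => k _; rewrite /rsd_ratio EDnn mul0r.
Qed.

Lemma RSD_eq0 S S' : RSD R S S' = 0 -> S = S'.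
Proof.
move=> RSD0; pose k := (size S + size S').+1.
have : rsd_ratio S S' k <= 0 by rewrite -RSD0 rsd_ratio_le_RSD.
rewrite /rsd_ratio pmulr_lle0 ?invr_gt0 ?ltr0n ?muln_gt0 // lern0 => /eqP/ED_eq0.
by apply: suff_inj; rewrite /k; lia.
Qed.

End RelativeSuffixDistance.

Theorem lemma14 (R : realType) (T : eqType) (S1 S2 S3 : seq T) :
  [/\ RSD R S1 S2 = RSD R S2 S1,
      0 <= RSD R S1 S2 <= 1,
      RSD R S1 S2 = 0 <-> S1 = S2
    & RSD R S1 S3 <= RSD R S1 S2 + RSD R S2 S3].
Proof.
split.
- exact: RSDC.
- by rewrite RSD_ge0 RSD_le1.
- by split=> [/RSD_eq0 | ->]; last exact: RSDnn.
- exact: RSD_triangle.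
Qed.
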